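(* Let $f\in\mathbb C[U_1,\ldots,U_n]$ have nonzero constant term. Then there exists $m\ge1$ with $\mathcal L(f^m)\ne0$.
   Context: $\mathcal L:\mathbb C[U_1,\ldots,U_n]\to\mathbb C$ is the $\mathbb C$-linear map defined on monomials by $\mathcal L(U_1^{\ell_1}\cdots U_n^{\ell_n})=\ell_1!\cdots\ell_n!$. *)

From HB Require Import structures.
From mathcomp Require Import all_boot all_order all_algebra.
Set Implicit Arguments. Unset Strict Implicit. Unset Printing Implicit Defensive.
Import Order.TTheory GRing.Theory Num.Theory.
Local Open Scope ring_scope.

Definition mono (n : nat) := (n.-tuple nat)%type.

(* a polynomial is a formal sum  \sum_k c_k U^{e_k}  given as a list of (e_k, c_k) *)
Definition mpoly (R : nzRingType) (n : nat) := seq (mono n * R)%type.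

Definition mono0 (n : nat) : mono n := [tuple 0%N | i < n].
Definition monoM (n : nat) (a b : mono n) : mono n :=
  [tuple (tnth a i + tnth b i)%N | i < n].

Definition mpoly1 (R : nzRingType) (n : nat) : mpoly R n := [:: (mono0 n, 1)].
Definition mpolyM (R : nzRingType) (n : nat) (p q : mpoly R n) : mpoly R n :=
  [seq (monoM s.1 t.1, s.2 * t.2) | s <- p, t <- q].
Definition mpolyX (R : nzRingType) (n : nat) (p : mpoly R n) (m : nat) : mpoly R n :=
  iter m (mpolyM p) (mpoly1 R n).

Definition const_term (R : nzRingType) (n : nat) (p : mpoly R n) : R :=
  \sum_(t <- p | t.1 == mono0 n) t.2.

Definition Lfun (R : nzRingType) (n : nat) (p : mpoly R n) : R :=
  \sum_(t <- p) t.2 * ((\prod_(i < n) (tnth t.1 i)`!)%N)%:R.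

(* Let [S] be the subring generated over [Z] by the coefficients of [f] and [c]
   its constant term.  For a prime [p], the Frobenius congruence
   [(a_1 + ... + a_k)^p = a_1^p + ... + a_k^p  mod pS], applied to [f] after a
   Kronecker substitution, gives [L(f^p) = sum_t c_t^p L(U^(p e_t))  mod pS];
   since [p] divides [(p l)!] for [l > 0], only constant terms survive and
   [L(f^p) = c^p  mod pS].  On the other hand, a nonzero element of a finitely
   generated ring [Z[y_1, ..., y_k]] has no power in [pS] for all large primes
   [p]: adjoin the generators one at a time, reading off leading coefficients
   for a transcendental generator and using integrality over a localization
   [S[1/e]] for an algebraic one.  Hence [L(f^p) <> 0] for large [p]. *)

From HB Require Import structures.
From mathcomp Require Import all_boot all_order all_algebra.
From mathcomp Require Import boolp ring.
Import Order.TTheory GRing.Theory Num.Theory.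
Local Open Scope ring_scope.

Set Implicit Arguments. Unset Strict Implicit. Unset Printing Implicit Defensive.

Section SubringType.
Variables (R : comNzRingType) (T : subringClosed R).

Record subring_type := SubringType {subring_val : R; _ : subring_val \in T}.
HB.instance Definition _ := [isSub for subring_val].
HB.instance Definition _ := [Choice of subring_type by <:].
HB.instance Definition _ := [SubChoice_isSubComNzRing of subring_type by <:].

Definition subring_morph : {rmorphism subring_type -> R} :=
  GRing.RMorphism.clone _ _ val _.

Lemma integral_subring x : x \in T -> integralOver subring_morph x.
Proof.
by move=> Tx; rewrite -[x]/(subring_morph (Sub x Tx)); apply: integral_id.
Qed.

Lemma integral_subringP z : integralOver subring_morph z ->
  exists2 chi : {poly R}, chi \is monic & (chi \is a polyOver T) && root chi z.
Proof.
case=> chi mchi rchi; exists (map_poly subring_morph chi); first exact: monic_map.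
by rewrite rchi andbT; apply/polyOverP => i; rewrite coef_map; apply: valP.
Qed.

End SubringType.

Section FrobeniusModp.
Variables (T : comNzRingType) (S : subringClosed T) (p : nat).
Hypothesis p_pr : prime p.

Lemma exprD_prime x y : x \in S -> y \in S ->
  exists2 w, w \in S & (x + y) ^+ p = x ^+ p + y ^+ p + p%:R * w.
Proof.
move=> Sx Sy; have [q pE] : exists q, p = q.+2.
  by case: p p_pr => [|[|q]] //; exists q.
exists (\sum_(i < q.+1) (x ^+ (p - i.+1) * y ^+ i.+1) *+ ('C(p, i.+1) %/ p)).
  by rewrite rpred_sum // => i _; rewrite rpredMn // rpredM ?rpredX.
rewrite exprDn pE big_ord_recl [X in _ + X = _]big_ord_recr /=.
rewrite /bump !leq0n !add1n bin0 binn subn0 subnn expr0 mulr1 mul1r !mulr1n.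
rewrite [X in _ + X = _]addrC addrA; congr (_ + _).
rewrite big_distrr; apply: eq_bigr => i _ /=.
rewrite mulr_natl -mulrnA divnK //.
by apply: prime_dvd_bin; [rewrite -pE | rewrite /= ltnS].
Qed.

Lemma expr_sum_prime (I : eqType) (r : seq I) (P : pred I) (F : I -> T) :
  {in r, forall i, F i \in S} ->
  exists2 w, w \in S &
    (\sum_(i <- r | P i) F i) ^+ p = \sum_(i <- r | P i) F i ^+ p + p%:R * w.
Proof.
elim: r => [|a r IH] rS.
  by exists 0; rewrite ?rpred0 // !big_nil mulr0 addr0 expr0n eqn0Ngt prime_gt0.
have rS' : {in r, forall i, F i \in S}.
  by move=> i ri; apply: rS; rewrite inE ri orbT.
have [w Sw IHE] := IH rS'.
have Ssum : \sum_(i <- r | P i) F i \in S.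
  by rewrite big_seq_cond rpred_sum // => i /andP[/rS'].
rewrite !big_cons; case: (P a); last by exists w.
have [w' Sw' ->] := exprD_prime (rS a (mem_head a r)) Ssum.
by exists (w + w'); rewrite ?rpredD // IHE mulrDr !addrA.
Qed.

End FrobeniusModp.

Lemma sum_digits_lt (B n : nat) (g : nat -> nat) :
  (forall i, (i < n)%N -> (g i < B)%N) -> (\sum_(j < n) g j * B ^ j < B ^ n)%N.
Proof.
elim: n g => [|n IH] g gB; first by rewrite big_ord0 expn0.
rewrite big_ord_recl expn0 muln1.
have -> : (\sum_(i < n) g (bump 0 i) * B ^ bump 0 i =
           B * \sum_(i < n) g i.+1 * B ^ i)%N.
  by rewrite big_distrr; apply: eq_bigr => i _ /=; rewrite expnS mulnCA.
rewrite expnS; apply: (@leq_trans (B * (\sum_(i < n) g i.+1 * B ^ i).+1)).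
  by rewrite mulnS ltn_add2r gB.
by rewrite leq_mul2l (IH (fun i => g i.+1)) ?orbT // => i lt_in; apply: (gB i.+1).
Qed.

Lemma sum_digitsK (B n : nat) (g : nat -> nat) :
  (forall i, (i < n)%N -> (g i < B)%N) ->
  forall i, (i < n)%N -> ((\sum_(j < n) g j * B ^ j) %/ B ^ i %% B = g i)%N.
Proof.
elim: n g => [|n IH] g gB i; first by rewrite ltn0.
have g0B : (g 0 < B)%N by apply: gB.
rewrite big_ord_recl expn0 muln1.
have -> : (\sum_(i < n) g (bump 0 i) * B ^ bump 0 i =
           (\sum_(i < n) g i.+1 * B ^ i) * B)%N.
  by rewrite big_distrl; apply: eq_bigr => j _ /=; rewrite expnS mulnCA mulnC.
case: i => [|i] lt_in; first by rewrite expn0 divn1 addnC modnMDl modn_small.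
rewrite expnS divnMA addnC divnMDl ?(leq_ltn_trans _ g0B) //.
rewrite (divn_small g0B) addn0.
by apply: (IH (fun i => g i.+1)) => // j lt_jn; apply: (gB j.+1).
Qed.

Definition mono_fact (n : nat) (e : mono n) : nat :=
  (\prod_(i < n) (tnth e i)`!)%N.

Definition monoX (n : nat) (e : mono n) (k : nat) : mono n :=
  [tuple (tnth e i * k)%N | i < n].

(* Kronecker substitution [U_i |-> 'X^(B ^ i)]: multiplicative, and injective on
   monomials whose exponents are all below [B]. *)
Section Kronecker.
Variables (R : comNzRingType) (n B : nat).

Definition kron_exp (e : mono n) : nat := (\sum_(i < n) tnth e i * B ^ i)%N.
Definition kron_digits (k : nat) : mono n := [tuple (k %/ B ^ i %% B)%N | i < n].
Definition kron (s : mpoly R n) : {poly R} :=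
  \sum_(t <- s) t.2 *: 'X^(kron_exp t.1).
Definition Lkron (P : {poly R}) : R :=
  \sum_(k < B ^ n) P`_k * (mono_fact (kron_digits k))%:R.
Definition mono_bounded (e : mono n) := forall i, (tnth e i < B)%N.

Lemma kron_exp_nth e : kron_exp e = (\sum_(i < n) nth 0%N e i * B ^ i)%N.
Proof. by apply: eq_bigr => i _; rewrite (tnth_nth 0%N). Qed.

Lemma kron_expK e : mono_bounded e -> kron_digits (kron_exp e) = e.
Proof.
move=> eB; apply: eq_from_tnth => i; rewrite tnth_mktuple kron_exp_nth.
rewrite sum_digitsK ?(tnth_nth 0%N) // => j lt_jn.
by have := eB (Ordinal lt_jn); rewrite (tnth_nth 0%N).
Qed.

Lemma kron_exp_lt e : mono_bounded e -> (kron_exp e < B ^ n)%N.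
Proof.
move=> eB; rewrite kron_exp_nth sum_digits_lt // => j lt_jn.
by have := eB (Ordinal lt_jn); rewrite (tnth_nth 0%N).
Qed.

Lemma kron_expM a b : kron_exp (monoM a b) = (kron_exp a + kron_exp b)%N.
Proof.
by rewrite /kron_exp -big_split; apply: eq_bigr => i _; rewrite tnth_mktuple mulnDl.
Qed.

Lemma kron_exp0 : kron_exp (mono0 n) = 0%N.
Proof. by rewrite /kron_exp big1 // => i _; rewrite tnth_mktuple. Qed.

Lemma kron_expX e k : kron_exp (monoX e k) = (kron_exp e * k)%N.
Proof.
by rewrite /kron_exp big_distrl; apply: eq_bigr => i _; rewrite tnth_mktuple mulnAC.
Qed.

Lemma kronM s s' : kron (mpolyM s s') = kron s * kron s'.
Proof.
rewrite /kron /mpolyM big_allpairs_dep big_distrl; apply: eq_bigr => t _ /=.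
rewrite big_distrr; apply: eq_bigr => t' _ /=.
by rewrite kron_expM exprD -scalerAl -scalerAr scalerA.
Qed.

Lemma kronX s m : kron (mpolyX s m) = kron s ^+ m.
Proof.
elim: m => [|m IH].
  by rewrite /kron big_cons big_nil addr0 /= kron_exp0 expr0 scale1r.
by rewrite /mpolyX iterS -/(mpolyX s m) kronM IH exprS.
Qed.

Lemma LkronD P Q : Lkron (P + Q) = Lkron P + Lkron Q.
Proof.
by rewrite /Lkron -big_split; apply: eq_bigr => k _; rewrite coefD mulrDl.
Qed.

Lemma Lkron0 : Lkron 0 = 0.
Proof. by rewrite /Lkron big1 // => k _; rewrite coef0 mul0r. Qed.

Lemma LkronZ c P : Lkron (c *: P) = c * Lkron P.
Proof.
by rewrite /Lkron big_distrr; apply: eq_bigr => k _; rewrite coefZ -mulrA.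
Qed.

Lemma LkronXn e : mono_bounded e ->
  Lkron 'X^(kron_exp e) = (mono_fact e)%:R.
Proof.
move=> eB; rewrite /Lkron (bigD1 (Ordinal (kron_exp_lt eB))) //=.
rewrite coefXn eqxx mul1r kron_expK // big1 ?addr0 // => k k_neq.
by rewrite coefXn (negbTE (k_neq : (k : nat) != _)) mul0r.
Qed.

Lemma Lkron_polyOver (S : subringClosed R) P :
  P \is a polyOver S -> Lkron P \in S.
Proof.
by move=> PS; rewrite rpred_sum // => k _; rewrite rpredM ?rpred_nat ?(polyOverP PS).
Qed.

Lemma Lfun_kron s : (forall t, t \in s -> mono_bounded t.1) ->
  Lfun s = Lkron (kron s).
Proof.
move=> sB; rewrite /kron (big_morph Lkron LkronD Lkron0) /Lfun !big_seq.
by apply: eq_bigr => t st; rewrite LkronZ LkronXn //; apply: sB.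
Qed.

End Kronecker.

Section LfunFrobenius.
Variables (R : comNzRingType) (n : nat) (S : subringClosed R) (p : nat).
Hypothesis p_pr : prime p.
Implicit Type f : mpoly R n.

Definition mdeg_max f : nat := (\max_(t <- f) \max_(i < n) tnth t.1 i)%N.

Definition mpoly_frob f k : mpoly R n := [seq (monoX t.1 k, t.2 ^+ k) | t <- f].

Lemma leq_mdeg_max f t i : t \in f -> (tnth t.1 i <= mdeg_max f)%N.
Proof.
pose F (t : mono n * R) := \max_(i < n) tnth t.1 i.
move=> ft; apply: (leq_trans _ (leq_bigmax_seq (F := F) t ft isT)).
exact: (@leq_bigmax _ (fun j : 'I_n => tnth t.1 j) i).
Qed.

Lemma mpolyX_exp_le f m t i :
  t \in mpolyX f m -> (tnth t.1 i <= m * mdeg_max f)%N.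
Proof.
elim: m t => [|m IH] t.
  by rewrite /mpolyX /= inE => /eqP ->; rewrite tnth_mktuple.
rewrite /mpolyX iterS -/(mpolyX f m) => /allpairsP[[s u] [/= fs um ->]].
by rewrite tnth_mktuple mulSn leq_add ?leq_mdeg_max ?IH.
Qed.

Lemma Lfun_mpolyX_frob f : (forall t, t \in f -> t.2 \in S) ->
  exists2 w, w \in S & Lfun (mpolyX f p) = Lfun (mpoly_frob f p) + p%:R * w.
Proof.
move=> fS; set B := (p * mdeg_max f).+1.
have fpB t : t \in mpolyX f p -> mono_bounded B t.1.
  by move=> ft i; rewrite ltnS mpolyX_exp_le.
have frobB t : t \in mpoly_frob f p -> mono_bounded B t.1.
  case/mapP=> t' ft' -> i /=; rewrite tnth_mktuple ltnS mulnC leq_mul2l.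
  by rewrite leq_mdeg_max ?orbT.
have fS' : {in f, forall t, t.2 *: 'X^(kron_exp B t.1) \in polyOver S}.
  by move=> t ft; rewrite polyOverZ ?polyOverXn ?fS.
have [G GS GE] : exists2 G, G \is a polyOver S &
    kron B f ^+ p = \sum_(t <- f) (t.2 *: 'X^(kron_exp B t.1)) ^+ p + p%:R * G.
  exact: expr_sum_prime.
rewrite (Lfun_kron fpB) (Lfun_kron frobB) kronX GE LkronD.
rewrite -polyC_natr mul_polyC LkronZ.
exists (Lkron n B G); first exact: Lkron_polyOver.
congr (_ + _); rewrite /kron big_map; congr Lkron; apply: eq_bigr => t _.
by rewrite exprZn -exprM kron_expX.
Qed.

Lemma dvdn_mono_fact_monoX e : e != mono0 n -> (p %| mono_fact (monoX e p))%N.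
Proof.
move=> e_neq0; have [i ei_neq0] : exists i, tnth e i != 0%N.
  apply/existsP; apply: contraR e_neq0 => /existsPn e0.
  by apply/eqP/eq_from_tnth => i; rewrite tnth_mktuple; apply/eqP/negPn/e0.
rewrite /mono_fact (bigD1 i) //= tnth_mktuple dvdn_mulr // dvdn_fact //.
by rewrite prime_gt0 //= leq_pmull // lt0n.
Qed.

Lemma Lfun_mpoly_frob f : (forall t, t \in f -> t.2 \in S) ->
  exists2 w, w \in S & Lfun (mpoly_frob f p) = const_term f ^+ p + p%:R * w.
Proof.
move=> fS; pose c0 (t : mono n * R) := t.1 == mono0 n.
have [w0 Sw0 ->] : exists2 w0, w0 \in S &
    const_term f ^+ p = \sum_(t <- f | c0 t) t.2 ^+ p + p%:R * w0.
  exact: expr_sum_prime.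
set w1 := \sum_(t <- f | ~~ c0 t) t.2 ^+ p * (mono_fact (monoX t.1 p) %/ p)%:R.
exists (w1 - w0).
  rewrite rpredB // /w1 big_seq_cond rpred_sum // => t /andP[/fS St _].
  by rewrite rpredM ?rpredX ?rpred_nat.
have const_part : \sum_(t <- f | c0 t) t.2 ^+ p * (mono_fact (monoX t.1 p))%:R =
    \sum_(t <- f | c0 t) t.2 ^+ p.
  apply: eq_bigr => t /eqP ->; rewrite /mono_fact big1 ?mulr1 // => i _.
  by rewrite !tnth_mktuple.
have nonconst_part :
    \sum_(t <- f | ~~ c0 t) t.2 ^+ p * (mono_fact (monoX t.1 p))%:R = p%:R * w1.
  rewrite big_distrr; apply: eq_bigr => t /dvdn_mono_fact_monoX p_dvd /=.
  by rewrite mulrCA -natrM mulnC divnK.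
rewrite /Lfun big_map (bigID c0) /= const_part nonconst_part; ring.
Qed.

Lemma Lfun_mpolyX_prime f : (forall t, t \in f -> t.2 \in S) ->
  exists2 w, w \in S & Lfun (mpolyX f p) = const_term f ^+ p + p%:R * w.
Proof.
move=> fS; have [w1 Sw1 ->] := Lfun_mpolyX_frob fS.
have [w2 Sw2 ->] := Lfun_mpoly_frob fS.
by exists (w2 + w1); rewrite ?rpredD // mulrDr addrA.
Qed.

End LfunFrobenius.

Section Subrings.
Variable K : numFieldType.

Definition ints : {pred K} := fun x => `[< exists z : int, x = z%:~R >].

Lemma ints_subring_closed : GRing.subring_closed ints.
Proof.
split; first by apply/asboolP; exists 1; rewrite rmorph1.
- move=> _ _ /asboolP[a ->] /asboolP[b ->]; apply/asboolP.
  by exists (a - b); rewrite rmorphB.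
- move=> _ _ /asboolP[a ->] /asboolP[b ->]; apply/asboolP.
  by exists (a * b); rewrite rmorphM.
Qed.
HB.instance Definition _ := GRing.isSubringClosed.Build K ints ints_subring_closed.

Definition adjoin (S : {pred K}) (y : K) : {pred K} :=
  fun x => `[< exists2 q, q \is a polyOver S & x = q.[y] >].

Lemma adjoin_subring_closed (S : subringClosed K) y :
  GRing.subring_closed (adjoin S y).
Proof.
split; first by apply/asboolP; exists 1; rewrite ?rpred1 ?hornerC.
- move=> _ _ /asboolP[a Sa ->] /asboolP[b Sb ->]; apply/asboolP.
  by exists (a - b); rewrite ?rpredB // hornerD hornerN.
- move=> _ _ /asboolP[a Sa ->] /asboolP[b Sb ->]; apply/asboolP.
  by exists (a * b); rewrite ?rpredM // hornerM.
Qed.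
HB.instance Definition _ (S : subringClosed K) y :=
  GRing.isSubringClosed.Build K (adjoin S y) (adjoin_subring_closed S y).

Lemma sub_adjoin (S : subringClosed K) y : {subset S <= adjoin S y}.
Proof.
by move=> x Sx; apply/asboolP; exists x%:P; rewrite ?polyOverC ?hornerC.
Qed.

Lemma mem_adjoin (S : subringClosed K) y : y \in adjoin S y.
Proof. by apply/asboolP; exists 'X; rewrite ?polyOverX ?hornerX. Qed.

(* The guard [e \in S] makes [localize S e] a subring for every [e]; for
   [e \in S] it is the ring [S[1/e]]. *)
Definition localize (S : {pred K}) (e : K) : {pred K} :=
  fun x => `[< e \in S -> exists k, x * e ^+ k \in S >].

Lemma localize_subring_closed (S : subringClosed K) e :
  GRing.subring_closed (localize S e).
Proof.
split; first by apply/asboolP => _; exists 0%N; rewrite mulr1 rpred1.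
- move=> x z /asboolP Hx /asboolP Hz; apply/asboolP => Se.
  have [[a Ha] [b Hb]] := (Hx Se, Hz Se); exists (a + b)%N.
  rewrite mulrBl exprD; apply: rpredB; first by rewrite mulrA rpredM ?rpredX.
  by rewrite [e ^+ a * _]mulrC mulrA rpredM ?rpredX.
- move=> x z /asboolP Hx /asboolP Hz; apply/asboolP => Se.
  have [[a Ha] [b Hb]] := (Hx Se, Hz Se); exists (a + b)%N.
  by rewrite exprD mulrACA rpredM.
Qed.
HB.instance Definition _ (S : subringClosed K) e :=
  GRing.isSubringClosed.Build K (localize S e) (localize_subring_closed S e).

Lemma sub_localize (S : {pred K}) e : {subset S <= localize S e}.
Proof. by move=> x Sx; apply/asboolP => _; exists 0%N; rewrite mulr1. Qed.

Lemma localize_subset (A B : {pred K}) e : {subset A <= B} -> e \in A ->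
  {subset localize A e <= localize B e}.
Proof.
move=> AB eA x /asboolP/(_ eA)[k Hk].
by apply/asboolP => _; exists k; apply: AB.
Qed.

Lemma invr_localize (S : subringClosed K) e : e != 0 -> e^-1 \in localize S e.
Proof.
by move=> e0; apply/asboolP => _; exists 1%N; rewrite expr1 mulVf ?rpred1.
Qed.

Lemma localizeP (S : subringClosed K) e x : e \in S -> x \in localize S e ->
  exists k, forall j, (k <= j)%N -> x * e ^+ j \in S.
Proof.
move=> Se /asboolP/(_ Se) [k Hk]; exists k => j kj.
by rewrite -(subnK kj) addnC exprD mulrA rpredM ?rpredX.
Qed.

Fixpoint subring_gen (ys : seq K) : {pred K} :=
  if ys is y :: ys' then adjoin (subring_gen ys') y else ints.

Lemma subring_gen_closed ys : GRing.subring_closed (subring_gen ys).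
Proof.
elim: ys => [|y ys IH] /=; first exact: ints_subring_closed.
pose S : subringClosed K :=
  HB.pack (subring_gen ys) (GRing.isSubringClosed.Build K _ IH).
exact: (adjoin_subring_closed S y).
Qed.
HB.instance Definition _ ys :=
  GRing.isSubringClosed.Build K (subring_gen ys) (subring_gen_closed ys).

Lemma mem_subring_gen ys y : y \in ys -> y \in subring_gen ys.
Proof.
elim: ys => [|y0 ys IH] //; rewrite inE => /orP[/eqP -> | /IH yy].
  exact: (mem_adjoin (subring_gen ys)).
exact: (@sub_adjoin (subring_gen ys) y0 y yy).
Qed.

Lemma integral_adjoin (S : subringClosed K) h y z :
  h \is a polyOver S -> h != 0 -> root h y -> z \in adjoin S y ->
  integralOver (subring_morph (localize S (lead_coef h))) z.
Proof.
move=> hS h0 hy /asboolP[q qS ->].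
have lc0 : lead_coef h != 0 by rewrite lead_coef_eq0.
apply: integral_horner.
  move=> _ /(nthP 0) [i _ <-]; apply/integral_subring/sub_localize.
  exact: (polyOverP qS).
apply: (@integral_root_monic _ _ _ _ ((lead_coef h)^-1 *: h)).
- by rewrite monicE lead_coefZ mulVf.
- by rewrite /root hornerZ (rootP hy) mulr0.
move=> _ /(nthP 0) [i _ <-]; apply: integral_subring; rewrite coefZ rpredM //.
  exact: invr_localize.
exact/sub_localize/(polyOverP hS).
Qed.

Lemma integral_localize_adjoin (S : subringClosed K) h y z :
  h \is a polyOver S -> h != 0 -> root h y ->
  z \in localize (adjoin S y) (lead_coef h) ->
  integralOver (subring_morph (localize S (lead_coef h))) z.
Proof.
move=> hS h0 hy zL.
have lc0 : lead_coef h != 0 by rewrite lead_coef_eq0.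
have /localizeP/(_ zL)[k /(_ k (leqnn k)) zA] :
  lead_coef h \in adjoin S y by apply/sub_adjoin/(polyOverP hS).
rewrite -[z](mulfK (expf_neq0 k lc0)); apply: integral_mul.
  exact: integral_adjoin zA.
by apply/integral_subring; rewrite -exprVn rpredX ?invr_localize.
Qed.

End Subrings.

Section Pradical.
Variable K : numFieldType.
Implicit Types (S : subringClosed K) (p : nat).

Definition pradical (S : {pred K}) p x :=
  exists k, exists2 z, z \in S & x ^+ k = p%:R * z.

Definition pfree (S : {pred K}) (b : K) :=
  exists N, forall p, prime p -> (N < p)%N -> ~ pradical S p b.

Lemma pradical_subset (A B : {pred K}) p x : {subset A <= B} ->
  pradical A p x -> pradical B p x.
Proof. by move=> AB [k [z /AB Bz E]]; exists k; exists z. Qed.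

Lemma pradicalMr S p x y : y \in S -> pradical S p x -> pradical S p (x * y).
Proof.
move=> Sy [k [z Sz E]]; exists k; exists (z * y ^+ k).
  by rewrite rpredM ?rpredX.
by rewrite exprMn E mulrA.
Qed.

Lemma pradicalX S p x k : pradical S p (x ^+ k) -> pradical S p x.
Proof. by case=> j [z Sz E]; exists (k * j)%N; exists z; rewrite // exprM. Qed.

Lemma pradical_localize S p e x : e \in S -> x \in S ->
  pradical (localize S e) p x -> pradical S p (x * e).
Proof.
move=> Se Sx [k [z /(localizeP Se)[m /(_ m (leqnn m)) Sz] E]].
exists (k + m)%N; exists (z * e ^+ m * (x ^+ m * e ^+ k)).
  by rewrite rpredM // rpredM ?rpredX.
by rewrite exprMn !exprD E; ring.
Qed.

(* Multiply [chi(z) = 0] by [p ^ deg chi]: [x ^ deg chi] becomes a combination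
   of lower powers of [x], each with a factor [p]. *)
Lemma pradical_integral S p x z : x \in S ->
  integralOver (subring_morph S) z -> x = p%:R * z -> pradical S p x.
Proof.
move=> Sx /integral_subringP[chi mchi /andP[chiS /rootP chiz]] xE.
have szE : size chi = (size chi).-1.+1.
  by rewrite prednK // size_poly_gt0 monic_neq0.
set d := (size chi).-1 in szE.
exists d; exists (- \sum_(i < d) chi`_i * p%:R ^+ (d - i).-1 * x ^+ i).
  rewrite rpredN rpred_sum // => i _; rewrite !rpredM ?rpredX ?rpred_nat //.
  exact: (polyOverP chiS).
have : p%:R ^+ d * chi.[z] = 0 by rewrite chiz mulr0.
rewrite horner_coef szE big_ord_recr /= mulrDr.
have -> : chi`_d = 1 by move: mchi; rewrite monicE /lead_coef -/d => /eqP.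
rewrite mul1r -exprMn -xE mulrN big_distrr /= => /eqP.
rewrite addrC addr_eq0 => /eqP ->; congr (- _); rewrite big_distrr.
apply: eq_bigr => i _ /=.
have di : d = ((d - i).-1 + 1 + i)%N.
  by rewrite addn1 prednK ?subn_gt0 // subnK // ltnW.
by rewrite {1}di !exprD xE exprMn; ring.
Qed.

Lemma pfree_ints (b : K) : b \in @ints K -> b != 0 -> pfree (@ints K) b.
Proof.
move=> /asboolP[z0 ->]; rewrite intr_eq0 -absz_gt0 => z0_gt0.
exists `|z0|%N => p p_pr ltz0p [k [_ /asboolP[z1 ->] E]].
have {}E : z0 ^+ k = p%:Z * z1.
  by apply/eqP; rewrite -(eqr_int K) rmorphXn rmorphM /= E.
have : (p %| `|z0| ^ k)%N by rewrite -abszX E abszM dvdn_mulr.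
rewrite Euclid_dvdX // => /andP[/(dvdn_leq z0_gt0)].
by rewrite leqNgt ltz0p.
Qed.

Lemma pfree_adjoin_transcendental S y b :
  (forall q, q \is a polyOver S -> q.[y] = 0 -> q = 0) ->
  (forall c, c \in S -> c != 0 -> pfree S c) ->
  b \in adjoin S y -> b != 0 -> pfree (adjoin S y) b.
Proof.
move=> y_tr IH /asboolP[q qS ->] qy_neq0.
have lq_neq0 : lead_coef q != 0.
  by rewrite lead_coef_eq0; apply: contraNneq qy_neq0 => ->; rewrite horner0.
have [N HN] := IH _ (polyOverP qS _) lq_neq0.
exists N => p p_pr ltNp [k [_ /asboolP[r rS ->] E]]; apply: (HN p p_pr ltNp).
have qrE : q ^+ k = p%:R *: r.
  apply/eqP; rewrite -subr_eq0; apply/eqP/y_tr.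
    by rewrite rpredB ?rpredX // polyOverZ ?rpred_nat.
  by rewrite hornerD hornerN hornerZ horner_exp E subrr.
exists k; exists (lead_coef r); first exact: (polyOverP rS).
by rewrite -lead_coef_exp qrE lead_coefZ.
Qed.

(* Stripping the power of ['X] dividing [chi] exposes a nonzero constant
   coefficient, which is a multiple of the root [b] in [S[b]]. *)
Lemma root_coef_lowest S (chi : {poly K}) b :
  chi != 0 -> chi \is a polyOver S -> root chi b -> b != 0 ->
  exists2 a, (a \in S) && (a != 0) &
    exists2 q, q \is a polyOver S & a = b * q.[b].
Proof.
move=> chi_neq0 chiS /rootP chib b_neq0.
have [|j chij jmin] := ex_minnP (P := fun j => chi`_j != 0).
  by exists (size chi).-1; rewrite -lead_coefE lead_coef_eq0.
set c := drop_poly j chi.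
have cS : c \is a polyOver S.
  by apply/polyOverP => i; rewrite coef_drop_poly (polyOverP chiS).
have chiE : chi = c * 'X^j.
  rewrite -{1}(poly_take_drop j chi) (_ : take_poly j chi = 0) ?add0r //.
  apply/polyP => i; rewrite coef_take_poly coef0; case: ifP => // ij.
  by apply/eqP; apply: contraTT ij => /jmin; rewrite -leqNgt.
have cb : c.[b] = 0.
  move: chib; rewrite chiE hornerM hornerXn => /eqP.
  by rewrite mulf_eq0 expf_eq0 (negbTE b_neq0) andbF orbF => /eqP.
exists c`_0; first by rewrite (polyOverP cS) coef_drop_poly add0n chij.
exists (- drop_poly 1 c).
  by rewrite rpredN; apply/polyOverP => i; rewrite coef_drop_poly (polyOverP cS).
have take1 : take_poly 1 c = (c`_0)%:P.
  by apply/polyP => -[|i]; rewrite coef_take_poly coefC.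
move: (poly_take_drop 1 c) => /(congr1 (horner^~ b)).
rewrite take1 hornerD hornerC hornerM hornerX cb => /eqP.
by rewrite addr_eq0 => /eqP ->; rewrite hornerN mulrN mulrC.
Qed.

(* [b] divides a nonzero [a] of [S] in [S[y][1/e]], which is integral over
   [S[1/e]]: a power of [a] in [p S[y][1/e]] yields a power of [a e] in [p S]. *)
Lemma pfree_adjoin_algebraic S y h b :
  h \is a polyOver S -> h != 0 -> root h y ->
  (forall c, c \in S -> c != 0 -> pfree S c) ->
  b \in adjoin S y -> b != 0 -> pfree (adjoin S y) b.
Proof.
move=> hS h_neq0 hy IH Ab b_neq0.
set e := lead_coef h.
have e_neq0 : e != 0 by rewrite lead_coef_eq0.
have Se : e \in S := polyOverP hS _.
have bL : b \in localize (adjoin S y) e by apply: sub_localize.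
have [chi mchi /andP[chiL chib]] :=
  integral_subringP (integral_localize_adjoin hS h_neq0 hy bL).
have [a0 /andP[La0 a0_neq0] [q qL a0E]] :=
  root_coef_lowest (monic_neq0 mchi) chiL chib b_neq0.
have [k /(_ k (leqnn k)) Sa] := localizeP Se La0.
set a := a0 * e ^+ k in Sa.
have ae_neq0 : a * e != 0 by rewrite !mulf_neq0 ?expf_neq0.
have [N HN] := IH _ (rpredM Sa Se) ae_neq0.
exists N => p p_pr ltNp /(pradical_subset (@sub_localize _ _ e)) Lb.
apply: (HN p p_pr ltNp); apply: (pradical_localize Se Sa).
have qbL : q.[b] * e ^+ k \in localize (adjoin S y) e.
  apply: rpredM; last by rewrite rpredX // sub_localize // sub_adjoin.
  apply: rpred_horner bL; apply/polyOverP => i.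
  exact: (localize_subset (@sub_adjoin _ S y) Se (polyOverP qL i)).
have [m [z zL E]] := pradicalMr qbL Lb.
apply: (@pradicalX _ _ _ m); apply: pradical_integral.
- by rewrite rpredX // sub_localize.
- exact: integral_localize_adjoin zL.
by rewrite -E /a a0E mulrA.
Qed.

Lemma pfree_subring_gen ys b : b \in subring_gen ys -> b != 0 ->
  pfree (subring_gen ys) b.
Proof.
elim: ys b => [|y ys IH] b; first exact: pfree_ints.
have [[h [hS h_neq0 hy]] | y_tr] :=
  pselect (exists h, [/\ h \is a polyOver (subring_gen ys), h != 0 & root h y]).
  exact: pfree_adjoin_algebraic hS h_neq0 hy IH.
apply: pfree_adjoin_transcendental IH => q qS /rootP qy.
by apply: contra_notP y_tr => /eqP q_neq0; exists q.
Qed.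

End Pradical.

Theorem proposition4p8 (R : numClosedFieldType) (n : nat) (f : mpoly R n) :
  const_term f != 0 ->
  exists m : nat, (1 <= m)%N /\ Lfun (mpolyX f m) != 0.
Proof.
move=> c_neq0; set S := subring_gen [seq t.2 | t <- f].
have fS t : t \in f -> t.2 \in S by move=> ft; apply/mem_subring_gen/map_f.
have cS : const_term f \in S.
  by rewrite /const_term big_seq_cond rpred_sum // => t /andP[/fS].
have [N Nfree] := pfree_subring_gen cS c_neq0.
have [p ltNp p_pr] := prime_above N.
exists p; split; first exact: prime_gt0.
apply/eqP => Lf0; apply: (Nfree p p_pr ltNp); exists p.
have [w Sw] := Lfun_mpolyX_prime p_pr fS.
rewrite Lf0 => /eqP; rewrite eq_sym addr_eq0 => /eqP ->.
by exists (- w); rewrite ?rpredN // mulrN.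
Qed.
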